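(* Let $\mathcal{L}$ be a horizontal segment $EF$ of length $1$ in the plane, and let $\mathcal{R}$ be a rectangle with vertices $A,B,C,D$ in counterclockwise order, $|AB|=|CD|=\frac12$, $|BC|=|AD|=\frac14$, labelled so that, with $O_1$ the centre of $\mathcal{R}$, $A=O_1+\frac{\sqrt5}{8}(\cos\alpha,\sin\alpha)$ for some $\alpha\in[\theta_0,\theta_0+\pi)$, where $\theta_0=\arctan\frac12$. Then $\mu(\mathcal{L},\mathcal{R})\geq \frac{\sqrt5}{8}\sin\alpha$.
   Context: $\mu(K_1,\dots,K_n)$ denotes the area of the convex hull of $K_1\cup\dots\cup K_n$. (For any such rectangle exactly one labelling satisfying these conditions exists; then the vector $\overrightarrow{CA}$ has argument $\alpha$ and $\overrightarrow{CD}$ has argument $\alpha-\theta_0$.) *)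

From HB Require Import structures.
From mathcomp Require Import all_boot all_order all_algebra.
From mathcomp Require Import all_classical all_reals all_analysis.
Set Implicit Arguments. Unset Strict Implicit. Unset Printing Implicit Defensive.
Import Order.TTheory GRing.Theory Num.Theory.
Local Open Scope classical_set_scope.
Local Open Scope ring_scope.

Section Defs.
Variable R : realType.
Definition pt := (R * R)%type.

Definition dist (P Q : pt) : R :=
  Num.sqrt ((P.1 - Q.1) ^+ 2 + (P.2 - Q.2) ^+ 2).

Definition chull (S : set pt) : set pt :=
  [set p | exists (n : nat) (w : 'I_n -> R) (x : 'I_n -> pt),
      (forall i, 0 <= w i) /\ \sum_(i < n) w i = 1 /\
      (forall i, S (x i)) /\
      p = (\sum_(i < n) w i * (x i).1, \sum_(i < n) w i * (x i).2)].

Definition area (S : set pt) : \bar R :=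
  ((@lebesgue_measure R) \x (@lebesgue_measure R))%E S.

Definition mu2 (K1 K2 : set pt) : \bar R := area (chull (K1 `|` K2)).

Definition segment (E F : pt) : set pt := chull [set E; F].
Definition quad (A B C D : pt) : set pt := chull [set A; B; C; D].

(* z-component of the cross product (Q - P) x (S - Q) *)
Definition cross3 (P Q S : pt) : R :=
  (Q.1 - P.1) * (S.2 - Q.2) - (Q.2 - P.2) * (S.1 - Q.1).

Definition ccw_rectangle (A B C D : pt) : Prop :=
  (B.1 - A.1 = C.1 - D.1 /\ B.2 - A.2 = C.2 - D.2) /\
  (B.1 - A.1) * (C.1 - B.1) + (B.2 - A.2) * (C.2 - B.2) = 0 /\
  0 < cross3 A B C.

End Defs.

From HB Require Import structures.
From mathcomp Require Import all_boot all_order all_algebra.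
From mathcomp Require Import all_classical all_reals all_analysis.
From mathcomp Require Import ring lra measurable_realfun.
Set Implicit Arguments.
Unset Strict Implicit.
Unset Printing Implicit Defensive.
Import Order.TTheory GRing.Theory Num.Theory numFieldNormedType.Exports.
Local Open Scope classical_set_scope.
Local Open Scope ring_scope.

(* The hull K of the segment and the rectangle is convex and contains E, F and
   the opposite vertices A and C, and the hypothesis on A says exactly that
   A.2 - C.2 = 2 (sqrt 5 / 8) sin alpha.  Let y0 be the height of EF.  Above
   the line of EF, K contains the triangle EFA, of area (A.2 - y0)^+ / 2, and
   below it the triangle EFC, of area (y0 - C.2)^+ / 2; together these are at
   least (A.2 - C.2) / 2.  Each triangle area is obtained by integrating the
   lengths of its vertical slices, which are piecewise linear ("tents") in the
   abscissa.  As the product measure of a set is by definition the integral of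
   the measures of its vertical sections, no measurability of K is needed. *)

Section Plane.
Variable R : realType.
Implicit Types (S K : set (pt R)) (P Q : pt R).

Definition convex_pt K := forall P Q (l : R), K P -> K Q -> 0 <= l <= 1 ->
  K ((1 - l) * P.1 + l * Q.1, (1 - l) * P.2 + l * Q.2).

Lemma convex_ptW K P Q l x y : convex_pt K -> K P -> K Q -> 0 <= l <= 1 ->
  x = (1 - l) * P.1 + l * Q.1 -> y = (1 - l) * P.2 + l * Q.2 -> K (x, y).
Proof. by move=> cK KP KQ l01 -> ->; exact: cK. Qed.

Lemma chull_sub S : S `<=` chull S.
Proof.
move=> P SP; exists 1%N, (fun=> 1), (fun=> P); do !split => //.
- by rewrite big_ord1.
- by case: P SP => p1 p2 _; rewrite !big_ord1 !mul1r.
Qed.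

Lemma chull_convex S : convex_pt (chull S).
Proof.
move=> _ _ l [n [w [x [w0 [w1 [Sx ->]]]]]] [n' [v [y [v0 [v1 [Sy ->]]]]]].
move=> /andP[l0 l1].
pose W i := match fintype.split i with inl j => (1 - l) * w j | inr j => l * v j end.
pose X i := match fintype.split i with inl j => x j | inr j => y j end.
have Wl j : W (lshift n' j) = (1 - l) * w j by rewrite /W (unsplitK (inl _ j)).
have Wr j : W (rshift n j) = l * v j by rewrite /W (unsplitK (inr _ j)).
have Xl j : X (lshift n' j) = x j by rewrite /X (unsplitK (inl _ j)).
have Xr j : X (rshift n j) = y j by rewrite /X (unsplitK (inr _ j)).
exists (n + n')%N, W, X; split; [|split; [|split]].
- by move=> i; rewrite /W; case: fintype.split => j; apply: mulr_ge0 => //; lra.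
- rewrite big_split_ord /=.
  under eq_bigr do rewrite Wl; under [X in _ + X]eq_bigr do rewrite Wr.
  by rewrite -!mulr_sumr w1 v1; ring.
- by move=> i; rewrite /X; case: fintype.split.
- congr pair; rewrite big_split_ord /= !mulr_sumr.
  all: by congr (_ + _); apply: eq_bigr => j _; rewrite ?Wl ?Xl ?Wr ?Xr mulrA.
Qed.

Lemma dist_horizontal (P Q : pt R) : P.2 = Q.2 -> dist P Q = `|P.1 - Q.1|.
Proof. by move=> PQ; rewrite /dist PQ subrr expr0n /= addr0 sqrtr_sqr. Qed.

End Plane.

Section Ramp.
Variable R : realType.
Local Notation leb := (@lebesgue_measure R).

Lemma integral_affine (a c lo hi : R) : lo < hi ->
  (\int[leb]_(x in `[lo, hi]) ((x - a) * c)%:E =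
   (((hi - a) ^+ 2 - (lo - a) ^+ 2) * c / 2)%:E)%E.
Proof.
move=> lohi.
pose G : R -> R := (c / 2) \*: ((id - cst a) * (id - cst a)).
pose g : R -> R := (id - cst a) * cst c.
have dG (x : R) : is_derive x (1 : R) G ((x - a) * c).
  apply: is_derive_eq.
  by change ((c / 2) * ((x - a) * (1 - 0) + (x - a) * (1 - 0)) = (x - a) * c); field.
have dg (x : R) : is_derive x (1 : R) g c.
  by apply: is_derive_eq; change ((x - a) * 0 + c * (1 - 0) = c); ring.
have derG (x : R) : derivable G x 1 := @ex_derive _ _ _ _ _ _ _ (dG x).
have contG (x : R) : {for x, continuous G}.
  by apply: differentiable_continuous; rewrite -derivable1_diffP; exact: derG.
have -> : ((hi - a) ^+ 2 - (lo - a) ^+ 2) * c / 2 = G hi - G lo.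
  change (((hi - a) ^+ 2 - (lo - a) ^+ 2) * c / 2 =
    c / 2 * ((hi - a) * (hi - a)) - c / 2 * ((lo - a) * (lo - a))).
  by rewrite !expr2; ring.
rewrite EFinB -(@continuous_FTC2 _ g) //.
- apply: derivable_within_continuous => x _.
  exact: @ex_derive _ _ _ _ _ _ _ (dg x).
- split; [by move=> x _; exact: derG | exact: cvg_at_right_filter (contG lo) |
    exact: cvg_at_left_filter (contG hi)].
- by move=> x _; rewrite derive1E (@derive_val _ _ _ _ _ _ _ (dG x)).
Qed.

Let continuous_secant (a m : R) : continuous (fun x : R => (x - a) / (m - a)).
Proof. by move=> x; apply: cvgM; [apply: cvgB; [exact: cvg_id|exact: cvg_cst]|exact: cvg_cst]. Qed.

Definition ramp (a m : R) : R -> R :=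
  (fun x => (x - a) / (m - a)) \_ `]Num.min a m, Num.max a m[.

Lemma ramp_between (a m x : R) : Num.min a m < x < Num.max a m ->
  0 < (x - a) / (m - a) < 1.
Proof.
case: (ltgtP a m) => [am|ma|<-]; last by move=> /andP[ax /(lt_trans ax)]; rewrite ltxx.
- move=> /andP[ax xm].
  by rewrite divr_gt0 ?subr_gt0 // ltr_pdivrMr ?subr_gt0 // mul1r ltrBlDr subrK.
- move=> /andP[mx xa]; rewrite -[_ / _]mulrNN -invrN divr_gt0 ?oppr_gt0 ?subr_lt0 //=.
  by rewrite ltr_pdivrMr ?oppr_gt0 ?subr_lt0 // mul1r ltrN2 ltrBlDr subrK.
Qed.

Lemma rampE (a m x : R) : ramp a m x =
  if Num.min a m < x < Num.max a m then (x - a) / (m - a) else 0.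
Proof. by rewrite /ramp patchE mem_setE /= in_itv. Qed.

Lemma ramp_ge0 (a m x : R) : 0 <= ramp a m x.
Proof. by rewrite rampE; case: ifP => // /ramp_between /andP[/ltW]. Qed.

Lemma ramp_le1 (a m x : R) : ramp a m x <= 1.
Proof. by rewrite rampE; case: ifP => // /ramp_between /andP[_ /ltW]. Qed.

Lemma ramp_disjoint (a m b x : R) : a <= m <= b ->
  ramp a m x = 0 \/ ramp b m x = 0.
Proof.
move=> /andP[am mb]; rewrite !rampE (min_l am) (max_r am) (min_r mb) (max_l mb).
case: ifP => [/andP[_ xm]|_]; last by left.
by right; rewrite ifF //; apply/negbTE; rewrite negb_and -leNgt (ltW xm).
Qed.

Lemma measurable_ramp (a m : R) : measurable_fun setT (ramp a m).
Proof.
rewrite /ramp -measurable_restrictT //; apply: measurable_funTS.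
exact: continuous_measurable_fun (@continuous_secant a m).
Qed.

Lemma integral_ramp (a m : R) :
  (\int[leb]_x (ramp a m x)%:E = (`|m - a| / 2)%:E)%E.
Proof.
change (\int[leb]_x (EFin \o ramp a m) x = (`|m - a| / 2)%:E)%E.
rewrite /ramp -restrict_EFin -integral_mkcond.
have mram (lo hi : R) : measurable_fun `]lo, hi[ (fun x => ((x - a) / (m - a))%:E).
  apply/measurable_EFinP; apply: measurable_funTS.
  exact: continuous_measurable_fun (@continuous_secant a m).
case: (ltgtP a m) => [am|ma|<-].
- rewrite -(@integral_itv_bndoo _ _ _ _ true false (mram _ _)) /=.
  rewrite integral_affine // gtr0_norm ?subr_gt0 //; congr (_%:E).
  by field; rewrite subr_eq0 gt_eqF.
- rewrite -(@integral_itv_bndoo _ _ _ _ true false (mram _ _)) /=.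
  rewrite integral_affine // ltr0_norm ?subr_lt0 //; congr (_%:E).
  by field; rewrite subr_eq0 lt_eqF.
- by rewrite set_itvoo0 ?lexx // integral_set0 subrr normr0 mul0r.
Qed.

End Ramp.

Section SliceFill.
Variable R : realType.
Local Notation leb := (@lebesgue_measure R).
Implicit Types (K : set (pt R)) (H : set R).

Definition slice_fill K H (c : R) := exists len : R -> R,
  [/\ measurable_fun setT len, forall x, 0 <= len x,
      (\int[leb]_x (len x)%:E = c%:E)%E &
      forall x, exists lo, `]lo, lo + len x[ `<=` xsection K x `&` H].

Lemma slice_fill0 K H : slice_fill K H 0.
Proof.
exists (fun=> 0); split => //; first exact: integral0.
by move=> x; exists 0; rewrite addr0 set_itvoo0.
Qed.

(* Needed because the sections of the hull are not known to be measurable. *)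
Lemma ge0_le_integral_nomeas (f g : R -> \bar R) :
  (forall x, 0 <= f x)%E -> (forall x, f x <= g x)%E ->
  (\int[leb]_x f x <= \int[leb]_x g x)%E.
Proof.
move=> f0 fg; have g0 x : (0 <= g x)%E := le_trans (f0 x) (fg x).
rewrite !ge0_integralE //; apply: ereal_sup_le => _ [h hf <-]; exists h => // x.
by apply: le_trans (hf x) _; rewrite !patch_setT.
Qed.

Lemma le_lebesgue_measure (A B : set R) : A `<=` B -> (leb A <= leb B)%E.
Proof.
move=> AB; rewrite /lebesgue_measure /lebesgue_stieltjes_measure /measure_extension.
exact: le_outer_measure.
Qed.

Lemma lebesgue_measure_itvoo (a l : R) : 0 <= l -> leb `]a, a + l[ = l%:E.
Proof.
move=> l0; rewrite lebesgue_measure_itv /= lte_fin ltrDl.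
case: ifPn => [_|]; first by rewrite -EFinB addrAC subrr add0r.
by rewrite -leNgt => l_le0; congr (_%:E); apply/eqP; rewrite eq_le l_le0 l0.
Qed.

Lemma area_ge_slice_fill K y0 c1 c2 :
  slice_fill K `]y0, +oo[ c1 -> slice_fill K `]-oo, y0[ c2 ->
  ((c1 + c2)%:E <= area K)%E.
Proof.
move=> [len1 [m1 len1_ge0 int1 sl1]] [len2 [m2 len2_ge0 int2 sl2]].
have -> : ((c1 + c2)%:E = \int[leb]_x ((len1 x)%:E + (len2 x)%:E))%E.
  rewrite ge0_integralD ?int1 ?int2 //.
  - by move=> x _; rewrite lee_fin.
  - exact/measurable_EFinP.
  - by move=> x _; rewrite lee_fin.
  - exact/measurable_EFinP.
apply: ge0_le_integral_nomeas => [x|x /=]; first by rewrite adde_ge0 ?lee_fin.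
have [lo1 sub1] := sl1 x; have [lo2 sub2] := sl2 x.
rewrite -(lebesgue_measure_itvoo lo1) // -(lebesgue_measure_itvoo lo2) //.
rewrite -measureU //=; last first.
  apply/seteqP; split => // y [/sub1[_ /=]] + /sub2[_ /=].
  by rewrite !in_itv /= andbT => y0y /(lt_trans y0y); rewrite ltxx.
by apply: le_lebesgue_measure => y [/sub1[]|/sub2[]].
Qed.

Definition yflip K := [set P | K (P.1, - P.2)].

Lemma slice_fill_yflip K y0 c :
  slice_fill (yflip K) `]- y0, +oo[ c -> slice_fill K `]-oo, y0[ c.
Proof.
move=> [len [mlen len_ge0 int sl]]; exists len; split => // x.
have [lo sub] := sl x; exists (- (lo + len x)) => y.
rewrite /= !in_itv /= => /andP[y_gt y_lt].
have [|Kxy y0y] := sub (- y); first by rewrite /= in_itv /=; apply/andP; split; lra.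
split; first by move: Kxy; rewrite /xsection /yflip /= !inE /= opprK.
by move: y0y; rewrite /= in_itv /= andbT ltrN2.
Qed.

End SliceFill.

Section Triangles.
Variable R : realType.
Implicit Types (K : set (pt R)).

Lemma convex_yflip K : convex_pt K -> convex_pt (yflip K).
Proof.
move=> cK P Q l KP KQ l01; rewrite /yflip /=.
by apply: (convex_ptW cK KP KQ l01) => //=; ring.
Qed.

Lemma convex_vsegment K m y1 y2 y : convex_pt K -> K (m, y1) -> K (m, y2) ->
  y1 <= y <= y2 -> K (m, y).
Proof.
move=> cK K1 K2 /andP[y1y yy2].
have [y12|y12] := eqVneq y1 y2; first by have -> : y = y2 by lra.
have y21 : 0 < y2 - y1 by rewrite subr_gt0 lt_neqAle y12 (le_trans y1y).
apply: (convex_ptW (l := (y - y1) / (y2 - y1)) cK K1 K2) => /=.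
- by apply/andP; split; [apply: divr_ge0 | rewrite ler_pdivrMr //]; lra.
- by ring.
- by field; rewrite gt_eqF.
Qed.

Lemma convex_ramp_slice K a qa m y1 y2 x : convex_pt K ->
  K (a, qa) -> K (m, y1) -> K (m, y2) -> y1 <= y2 ->
  `](1 - ramp a m x) * qa + ramp a m x * y1,
     (1 - ramp a m x) * qa + ramp a m x * y1 + (y2 - y1) * ramp a m x[
  `<=` xsection K x.
Proof.
move=> cK Ka K1 K2 y12 y; rewrite /xsection /= in_itv /= inE.
rewrite rampE; case: ifPn => [xin|_]; last by move=> /andP[lo hi]; lra.
have /andP[t0 t1] := ramp_between xin.
move: t0 t1; set t := (x - a) / (m - a) => t0 t1 /andP[lo hi].
have ma : m - a != 0 by apply: contraTneq t0 => ma0; rewrite /t ma0 invr0 mulr0 ltxx.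
pose Y := (y - (1 - t) * qa) / t.
have KY : K (m, Y).
  apply: convex_vsegment cK K1 K2 _.
  by rewrite /Y ler_pdivlMr // ler_pdivrMr //; apply/andP; split; lra.
apply: (convex_ptW (l := t) cK Ka KY) => /=; first lra.
- by rewrite /t; field.
- by rewrite /Y; field; rewrite gt_eqF.
Qed.

(* K contains the triangles (a, qa), (m, y1), (m, y2) and (b, qb), (m, y1),
   (m, y2), whose vertical sections have lengths (y2 - y1) times a ramp. *)
Lemma tent_slice_fill K a m b qa qb y1 y2 y0 : convex_pt K -> a <= m <= b ->
  K (a, qa) -> K (b, qb) -> K (m, y1) -> K (m, y2) -> y1 <= y2 ->
  y0 <= qa -> y0 <= qb -> y0 <= y1 ->
  slice_fill K `]y0, +oo[ ((y2 - y1) * (b - a) / 2).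
Proof.
move=> cK amb Ka Kb K1 K2 y12 qa0 qb0 y10.
have /andP[am mb] := amb.
exists (fun x => (y2 - y1) * (ramp a m x + ramp b m x)); split.
- apply: measurable_funM => //.
  exact: measurable_funD (measurable_ramp _ _) (measurable_ramp _ _).
- by move=> x; rewrite mulr_ge0 ?subr_ge0 // addr_ge0 // ramp_ge0.
- under eq_integral do rewrite EFinM.
  rewrite ge0_integralZl_EFin ?subr_ge0 //; last 2 first.
  + by move=> x _; rewrite lee_fin addr_ge0 ?ramp_ge0.
  + apply/measurable_EFinP.
    exact: measurable_funD (measurable_ramp _ _) (measurable_ramp _ _).
  under eq_integral do rewrite EFinD.
  rewrite ge0_integralD //; last 4 first.
  + by move=> x _; rewrite lee_fin ramp_ge0.
  + by apply/measurable_EFinP; exact: measurable_ramp.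
  + by move=> x _; rewrite lee_fin ramp_ge0.
  + by apply/measurable_EFinP; exact: measurable_ramp.
  rewrite !integral_ramp -EFinD -EFinM (ger0_norm (_ : 0 <= m - a)) ?subr_ge0 //.
  by rewrite (ler0_norm (_ : m - b <= 0)) ?subr_le0 //; congr (_%:E); ring.
- move=> x; have [ra|rb] := ramp_disjoint x amb.
  + exists ((1 - ramp b m x) * qb + ramp b m x * y1) => y.
    rewrite ra add0r => yin; split; first exact: convex_ramp_slice cK Kb K1 K2 y12 y yin.
    move: yin; rewrite /= !in_itv /= andbT => /andP[+ _].
    by have := ramp_ge0 b m x; have := ramp_le1 b m x; nra.
  + exists ((1 - ramp a m x) * qa + ramp a m x * y1) => y.
    rewrite rb addr0 => yin; split; first exact: convex_ramp_slice cK Ka K1 K2 y12 y yin.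
    move: yin; rewrite /= !in_itv /= andbT => /andP[+ _].
    by have := ramp_ge0 a m x; have := ramp_le1 a m x; nra.
Qed.

Lemma triangle_slice_fill K e w y0 p h : convex_pt K -> 0 < w -> 0 <= h ->
  K (e, y0) -> K (e + w, y0) -> K (p, y0 + h) ->
  slice_fill K `]y0, +oo[ (w * h / 2).
Proof.
(* Cut along the vertical through the middle vertex in abscissa order. *)
move=> cK w0 h0 KE KF KP.
have [pe|ep] := ltP p e.
  have d0 : 0 < e + w - p by lra.
  have KX : K (e, y0 + h * w / (e + w - p)).
    apply: (convex_ptW (l := (e - p) / (e + w - p)) cK KP KF) => /=.
    - by apply/andP; split; [apply: divr_ge0 | rewrite ler_pdivrMr //]; lra.
    - by field; rewrite gt_eqF.
    - by field; rewrite gt_eqF.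
  rewrite (_ : w * h / 2 = (y0 + h * w / (e + w - p) - y0) * (e + w - p) / 2); last first.
    by field; rewrite gt_eqF.
  apply: tent_slice_fill cK _ KP KF KE KX _ _ _ _ => //; try lra.
  by rewrite lerDl divr_ge0 ?mulr_ge0 //; lra.
have [pew|ewp] := leP p (e + w).
  have KX : K (p, y0).
    apply: (convex_ptW (l := (p - e) / w) cK KE KF) => /=.
    - by apply/andP; split; [apply: divr_ge0 | rewrite ler_pdivrMr //]; lra.
    - by field; rewrite gt_eqF.
    - by ring.
  rewrite (_ : w * h / 2 = (y0 + h - y0) * (e + w - e) / 2); last by ring.
  by apply: tent_slice_fill cK _ KE KF KX KP _ _ _ _ => //; [apply/andP; split | lra].
have d0 : 0 < p - e by lra.
have KX : K (e + w, y0 + h * w / (p - e)).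
  apply: (convex_ptW (l := w / (p - e)) cK KE KP) => /=.
  - by apply/andP; split; [apply: divr_ge0 | rewrite ler_pdivrMr //]; lra.
  - by field; rewrite gt_eqF.
  - by field; rewrite gt_eqF.
rewrite (_ : w * h / 2 = (y0 + h * w / (p - e) - y0) * (p - e) / 2); last first.
  by field; rewrite gt_eqF.
apply: tent_slice_fill cK _ KE KP KF KX _ _ _ _ => //; try lra.
by rewrite lerDl divr_ge0 ?mulr_ge0 //; lra.
Qed.

Lemma slice_fill_above K e w y0 P : convex_pt K -> 0 < w ->
  K (e, y0) -> K (e + w, y0) -> K P ->
  slice_fill K `]y0, +oo[ (w * Num.max (P.2 - y0) 0 / 2).
Proof.
move=> cK w0 KE KF KP; have [h0|h0] := leP 0 (P.2 - y0).
  apply: (triangle_slice_fill (p := P.1)) cK w0 h0 KE KF _.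
  by rewrite addrCA subrr addr0 -surjective_pairing.
by rewrite mulr0 mul0r; exact: slice_fill0.
Qed.

Lemma slice_fill_below K e w y0 P : convex_pt K -> 0 < w ->
  K (e, y0) -> K (e + w, y0) -> K P ->
  slice_fill K `]-oo, y0[ (w * Num.max (y0 - P.2) 0 / 2).
Proof.
move=> cK w0 KE KF KP; have [h0|h0] := leP 0 (y0 - P.2).
  apply: slice_fill_yflip.
  apply: (triangle_slice_fill (e := e) (p := P.1)) (convex_yflip cK) w0 h0 _ _ _;
    rewrite /yflip /= ?opprK //.
  by rewrite (_ : - (- y0 + (y0 - P.2)) = P.2) -?surjective_pairing //; ring.
by rewrite mulr0 mul0r; exact: slice_fill0.
Qed.

End Triangles.

Theorem mainTheorem5 (R : realType) (E F A B C D : R * R) (alpha : R) :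
  E.2 = F.2 -> dist E F = 1 ->
  ccw_rectangle A B C D ->
  dist A B = 1 / 2 -> dist C D = 1 / 2 ->
  dist B C = 1 / 4 -> dist A D = 1 / 4 ->
  atan (1 / 2) <= alpha < atan (1 / 2) + pi ->
  A = ((A.1 + C.1) / 2 + Num.sqrt 5 / 8 * cos alpha,
       (A.2 + C.2) / 2 + Num.sqrt 5 / 8 * sin alpha) ->
  ((Num.sqrt 5 / 8 * sin alpha)%:E <=
     mu2 (segment E F) (quad A B C D))%E.
Proof.
move=> EF_horiz EF_unit _ _ _ _ _ _ A_def.
have AC : A.2 - C.2 = 2 * (Num.sqrt 5 / 8 * sin alpha).
  by have /= := congr1 snd A_def; lra.
set K := chull (segment E F `|` quad A B C D).
have cK : convex_pt K by exact: chull_convex.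
have KE : K E by apply: chull_sub; left; apply: chull_sub; left.
have KF : K F by apply: chull_sub; left; apply: chull_sub; right.
have KA : K A by apply: chull_sub; right; apply: chull_sub; left; left; left.
have KC : K C by apply: chull_sub; right; apply: chull_sub; left; right.
have [e [Ke Ke1]] : exists e, K (e, E.2) /\ K (e + 1, E.2).
  move: EF_unit; rewrite dist_horizontal //.
  case: (lerP E.1 F.1) => _ EF1.
  - exists E.1; rewrite -surjective_pairing (_ : E.1 + 1 = F.1); last by lra.
    by rewrite EF_horiz -surjective_pairing.
  - exists F.1; rewrite (_ : F.1 + 1 = E.1); last by lra.
    by rewrite -surjective_pairing EF_horiz -surjective_pairing.
have := area_ge_slice_fill (slice_fill_above cK ltr01 Ke Ke1 KA)
  (slice_fill_below cK ltr01 Ke Ke1 KC).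
apply: le_trans; rewrite lee_fin.
have maxA : A.2 - E.2 <= Num.max (A.2 - E.2) 0 by rewrite le_max lexx.
have maxC : E.2 - C.2 <= Num.max (E.2 - C.2) 0 by rewrite le_max lexx.
lra.
Qed.
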